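(* Fix $\varepsilon\in\{-1,1\}$. Let $P_0^{(0)},P_1^{(0)},P_2^{(0)}\in\mathbb H$ form a hyperbolic triangle, and for $k\ge1$ let $P_0^{(k)}P_1^{(k)}P_2^{(k)}$ be the Napoleonization (with sign $\varepsilon$) of $P_0^{(k-1)}P_1^{(k-1)}P_2^{(k-1)}$, where before each Napoleonization the vertices of the current triangle are labelled so that $\langle P_0\tilde\times P_1,P_2\rangle\ge0$. Then, as $k\to+\infty$, the triangles become more nearly equilateral and shrink to a point: for every $i\in\mathbb Z/3\mathbb Z$, $-\langle P^{(k)}_{i+1},P^{(k)}_{i+2}\rangle\to1$, i.e. the hyperbolic length $\operatorname{arccosh}(-\langle P^{(k)}_{i+1},P^{(k)}_{i+2}\rangle)$ of every side tends to $0$ (equivalently $\sqrt{1-2\langle P^{(k)}_{i+1},P^{(k)}_{i+2}\rangle}\to\sqrt3$).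
   Context: On $\mathbb R^3$ the Minkowski form is $\langle v,w\rangle=-v_1w_1+v_2w_2+v_3w_3$; $\mathbb H=\{P\in\mathbb R^3:\langle P,P\rangle=-1,\ P_1\ge1\}$, with distance $\operatorname{arccosh}(-\langle P,Q\rangle)$. The hyperbolic cross product is $v\tilde\times w:=J(v\times w)$ with $J=\mathrm{diag}(-1,1,1)$ and $\times$ the Euclidean cross product. The centroid of $A,B,C\in\mathbb H$ is $(A+B+C)/\sqrt{-\langle A+B+C,A+B+C\rangle}$. Napoleonization with sign $\varepsilon$ of a triangle $P_0P_1P_2$ (vertices labelled so that $\langle P_0\tilde\times P_1,P_2\rangle\ge0$): for $i\in\mathbb Z/3\mathbb Z$ let $Q_i=\frac{-\langle P_{i+1},P_{i+2}\rangle(P_{i+1}+P_{i+2})+\varepsilon\sqrt{1-2\langle P_{i+1},P_{i+2}\rangle}\,P_{i+1}\tilde\times P_{i+2}}{1-\langle P_{i+1},P_{i+2}\rangle}$ (so $P_{i+1}P_{i+2}Q_i$ is equilateral) and let $R_i$ be the centroid of $P_{i+1}P_{i+2}Q_i$, which equals $\frac{\sqrt{1-2\langle P_{i+1},P_{i+2}\rangle}(P_{i+1}+P_{i+2})+\varepsilon P_{i+1}\tilde\times P_{i+2}}{\sqrt3(1-\langle P_{i+1},P_{i+2}\rangle)}$; the Napoleonization is $R_0R_1R_2$. *)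

From Stdlib Require Import Reals.
Open Scope R_scope.

Definition vec : Type := (R * R * R)%type.
Definition c1 (v : vec) : R := fst (fst v).
Definition c2 (v : vec) : R := snd (fst v).
Definition c3 (v : vec) : R := snd v.

Definition vadd (v w : vec) : vec := (c1 v + c1 w, c2 v + c2 w, c3 v + c3 w).
Definition vscale (a : R) (v : vec) : vec := (a * c1 v, a * c2 v, a * c3 v).

Definition mink (v w : vec) : R := - (c1 v * c1 w) + c2 v * c2 w + c3 v * c3 w.

Definition inH (P : vec) : Prop := mink P P = -1 /\ 1 <= c1 P.

Definition cross (v w : vec) : vec :=
  (c2 v * c3 w - c3 v * c2 w, c3 v * c1 w - c1 v * c3 w, c1 v * c2 w - c2 v * c1 w).
Definition hcross (v w : vec) : vec :=
  (- c1 (cross v w), c2 (cross v w), c3 (cross v w)).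

Definition centroid (A B C : vec) : vec :=
  let S := vadd (vadd A B) C in vscale (/ sqrt (- mink S S)) S.

(* Apex Q of the equilateral htri A B Q on side AB, with sign eps. *)
Definition napQ (eps : R) (A B : vec) : vec :=
  vscale (/ (1 - mink A B))
    (vadd (vscale (- mink A B) (vadd A B))
          (vscale (eps * sqrt (1 - 2 * mink A B)) (hcross A B))).

Definition napR (eps : R) (A B : vec) : vec := centroid A B (napQ eps A B).

Definition htri : Type := (vec * vec * vec)%type.
Definition vtx (T : htri) (i : nat) : vec :=
  match i with
  | O => fst (fst T)
  | S O => snd (fst T)
  | _ => snd T
  end.

Definition orient (T : htri) : R := mink (hcross (vtx T 0) (vtx T 1)) (vtx T 2).

Definition napoleonize (eps : R) (T : htri) : htri :=
  (napR eps (vtx T 1) (vtx T 2), napR eps (vtx T 2) (vtx T 0), napR eps (vtx T 0) (vtx T 1)).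

Definition relabel (T L : htri) : Prop :=
  let a := vtx T 0 in let b := vtx T 1 in let c := vtx T 2 in
  L = (a, b, c) \/ L = (b, c, a) \/ L = (c, a, b) \/
  L = (a, c, b) \/ L = (c, b, a) \/ L = (b, a, c).

(* Write a_i for the cosh of the side opposite P_i, sigma = a0 + a1 + a2 and
   D = <P0 ~x P1, P2> >= 0, so that D^2 is the Gram determinant of the a_i.  The
   Napoleon points have the closed form
     R_i = (sqrt (1 + 2 a_i) (P_(i+1) + P_(i+2)) + eps P_(i+1) ~x P_(i+2)) / (sqrt 3 (1 + a_i)),
   hence <R_i, P0 + P1 + P2> is an explicit function of the a_i and D.  Both
   Y = R0 + R1 + R2 and Z = P0 + P1 + P2 are timelike, with <Y,Y> = -(3 + 2 sigma')
   (primes refer to the Napoleonized triangle) and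
   <Z,Z> = -(3 + 2 sigma), so the reverse Cauchy-Schwarz inequality gives
   (3 + 2 sigma')(3 + 2 sigma) <= <Y,Z>^2.  A polynomial estimate on <Y,Z>, certified by
   explicit sums of squares and of monomials with nonnegative coefficients, then gives
     sigma' <= sigma - (sigma - 3)^2 / (40 (sigma - 2)).
   Hence sigma - 3 >= 0 decreases to 0, and every side cosh, which lies in [1, sigma - 2],
   tends to 1. *)

From Pilot Require Import Defs.
From Stdlib Require Import Reals Lra Lia Psatz.
Open Scope R_scope.

(* [Defs.c1] is qualified because Stdlib's Reals also exports a [c1]. *)
Ltac expand_vec :=
  repeat match goal with v : vec |- _ => destruct v as [[? ?] ?] end;
  unfold mink, hcross, cross, vadd, vscale, Defs.c1, c2, c3 in *; simpl in *.

Lemma vadd3_cycle u v w : vadd (vadd u v) w = vadd (vadd v w) u.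
Proof. expand_vec; f_equal; [f_equal |]; ring. Qed.

Lemma vscale_vscale a b v : vscale a (vscale b v) = vscale (a * b) v.
Proof. expand_vec; f_equal; [f_equal |]; ring. Qed.

Lemma vadd_vscale_comb u k a b X :
  vadd u (vscale k (vadd (vscale a u) (vscale b X)))
  = vadd (vscale (1 + k * a) u) (vscale (k * b) X).
Proof. expand_vec; f_equal; [f_equal |]; ring. Qed.

Lemma c1_vadd v w : Defs.c1 (vadd v w) = Defs.c1 v + Defs.c1 w.
Proof. reflexivity. Qed.

Lemma c1_vscale k v : Defs.c1 (vscale k v) = k * Defs.c1 v.
Proof. reflexivity. Qed.

Lemma mink_sym v w : mink v w = mink w v.
Proof. expand_vec; ring. Qed.

Lemma mink_add_l u v w : mink (vadd u v) w = mink u w + mink v w.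
Proof. expand_vec; ring. Qed.

Lemma mink_add_r u v w : mink u (vadd v w) = mink u v + mink u w.
Proof. expand_vec; ring. Qed.

Lemma mink_scale_l k v w : mink (vscale k v) w = k * mink v w.
Proof. expand_vec; ring. Qed.

Lemma mink_hcross_r v w : mink (hcross v w) w = 0.
Proof. expand_vec; ring. Qed.

Lemma mink_hcross_cycle u v w : mink (hcross u v) w = mink (hcross v w) u.
Proof. expand_vec; ring. Qed.

Lemma mink_hcross_hcross v w :
  mink (hcross v w) (hcross v w) = mink v w * mink v w - mink v v * mink w w.
Proof. expand_vec; ring. Qed.

Lemma mink_hcross_sqr u v w :
  mink (hcross u v) w * mink (hcross u v) w =
  - (mink u u * mink v v * mink w w + 2 * mink u v * mink v w * mink w u
     - mink u u * mink v w * mink v w - mink v v * mink w u * mink w u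
     - mink w w * mink u v * mink u v).
Proof. expand_vec; ring. Qed.

Lemma mink_sum3_unit u v w : mink u u = -1 -> mink v v = -1 -> mink w w = -1 ->
  mink (vadd (vadd u v) w) (vadd (vadd u v) w) = -3 + 2 * (mink u v + mink v w + mink w u).
Proof.
  intros Hu Hv Hw.
  rewrite !mink_add_l, !mink_add_r, Hu, Hv, Hw, (mink_sym v u), (mink_sym w v), (mink_sym w u).
  ring.
Qed.

Lemma mink_timelike_neg_iff X Z : mink X X < 0 -> mink Z Z < 0 ->
  (mink X Z < 0 <-> 0 < Defs.c1 X * Defs.c1 Z).
Proof.
  destruct X as [[x1 x2] x3], Z as [[z1 z2] z3]; expand_vec; intros HX HZ.
  set (p := x2 * z2 + x3 * z3); set (q := x1 * z1).
  assert (Hcs : p * p <= (x2 * x2 + x3 * x3) * (z2 * z2 + z3 * z3))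
    by (unfold p; pose proof (Rle_0_sqr (x2 * z3 - x3 * z2)); unfold Rsqr in *; nra).
  assert (Hlt : p * p < q * q).
  { assert (0 <= x2 * x2 + x3 * x3) by nra.
    assert (0 <= z2 * z2 + z3 * z3) by nra.
    unfold q; nra. }
  split; intro H.
  - destruct (Rlt_or_le 0 q) as [Hq | Hq]; [exact Hq |].
    assert (p < q) by (unfold p; lra).
    assert (0 < (q - p) * (- p - q)) by (apply Rmult_lt_0_compat; lra). nra.
  - destruct (Rlt_or_le p q) as [Hpq | Hpq]; [unfold p in *; lra |]. nra.
Qed.

Lemma mink_orth_timelike_ge0 W Z : mink Z Z < 0 -> mink W Z = 0 -> 0 <= mink W W.
Proof.
  destruct W as [[w1 w2] w3], Z as [[z1 z2] z3]; expand_vec; intros HZ HWZ.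
  assert (Hcs : (w1 * z1) * (w1 * z1) <= (w2 * w2 + w3 * w3) * (z2 * z2 + z3 * z3)).
  { replace (w1 * z1) with (w2 * z2 + w3 * z3) by lra.
    pose proof (Rle_0_sqr (w2 * z3 - w3 * z2)); unfold Rsqr in *; nra. }
  nra.
Qed.

Lemma reverse_cauchy_schwarz Y Z : mink Z Z < 0 ->
  mink Y Y * mink Z Z <= mink Y Z * mink Y Z.
Proof.
  intro HZ.
  pose proof (mink_orth_timelike_ge0 (hcross Y Z) Z HZ (mink_hcross_r Y Z)).
  rewrite mink_hcross_hcross in *; lra.
Qed.

Lemma inH_mink_le P Q : inH P -> inH Q -> mink P Q <= -1.
Proof.
  intros [HP HP1] [HQ HQ1].
  assert (Hneg : mink P Q < 0).
  { apply mink_timelike_neg_iff; [lra | lra | nra]. }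
  pose proof (reverse_cauchy_schwarz P Q) as Hrcs.
  rewrite HP, HQ in Hrcs. nra.
Qed.

Lemma inH_intro v : mink v v = -1 -> 0 < Defs.c1 v -> inH v.
Proof.
  destruct v as [[x1 x2] x3]; unfold inH; expand_vec; intros H H1.
  split; [exact H | nra].
Qed.

Lemma sqrt3_pos : 0 < sqrt 3.
Proof. apply sqrt_lt_R0; lra. Qed.

Lemma sqrt3_sqr : sqrt 3 * sqrt 3 = 3.
Proof. apply sqrt_sqrt; lra. Qed.

Definition napV (s e : R) (A B : vec) : vec :=
  vadd (vscale s (vadd A B)) (vscale e (hcross A B)).

Lemma mink_napV s e A B : mink (napV s e A B) (napV s e A B) =
  s * s * (mink A A + 2 * mink A B + mink B B)
  + e * e * (mink A B * mink A B - mink A A * mink B B).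
Proof. unfold napV; expand_vec; ring. Qed.

Lemma mink_napV_AB s e A B : mink (napV s e A B) (vadd A B) =
  s * (mink A A + 2 * mink A B + mink B B).
Proof. unfold napV; expand_vec; ring. Qed.

Lemma mink_napV_sum3 s e A B C : mink (napV s e A B) (vadd (vadd A B) C) =
  s * (mink A A + 2 * mink A B + mink B B + mink A C + mink B C) + e * mink (hcross A B) C.
Proof. unfold napV; expand_vec; ring. Qed.

Lemma vscale_napV t s e A B :
  vscale t (napV s e A B) = vadd (vscale (t * s) (vadd A B)) (vscale (t * e) (hcross A B)).
Proof. unfold napV; expand_vec; f_equal; [f_equal |]; ring. Qed.

Lemma mink_napV_unit eps A B : eps * eps = 1 -> inH A -> inH B ->
  mink (napV (sqrt (1 - 2 * mink A B)) eps A B) (napV (sqrt (1 - 2 * mink A B)) eps A B)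
  = - 3 * ((1 - mink A B) * (1 - mink A B)).
Proof.
  intros Heps HA HB.
  pose proof (inH_mink_le A B HA HB).
  rewrite mink_napV, (proj1 HA), (proj1 HB), Heps, sqrt_sqrt by lra; ring.
Qed.

Lemma napR_closed_form eps A B : eps * eps = 1 -> inH A -> inH B ->
  napR eps A B = vscale (/ (sqrt 3 * (1 - mink A B))) (napV (sqrt (1 - 2 * mink A B)) eps A B).
Proof.
  intros Heps HA HB.
  pose proof (inH_mink_le A B HA HB) as Hc.
  set (c := mink A B) in *; set (s := sqrt (1 - 2 * c)).
  assert (Hs : 0 < s) by (apply sqrt_lt_R0; lra).
  assert (Hss : s * s = 1 - 2 * c) by (apply sqrt_sqrt; lra).
  assert (Hsum : vadd (vadd A B) (napQ eps A B) = vscale (s / (1 - c)) (napV s eps A B)).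
  { unfold napQ; fold c s.
    rewrite vadd_vscale_comb, vscale_napV.
    replace (1 + / (1 - c) * - c) with (s / (1 - c) * s)
      by (transitivity (s * s / (1 - c)); [field | rewrite Hss; field]; lra).
    replace (/ (1 - c) * (eps * s)) with (s / (1 - c) * eps) by (field; lra).
    reflexivity. }
  pose proof (mink_napV_unit eps A B Heps HA HB) as HV; fold c s in HV.
  assert (Hnorm : sqrt (- mink (vadd (vadd A B) (napQ eps A B)) (vadd (vadd A B) (napQ eps A B)))
                  = sqrt 3 * s).
  { rewrite Hsum, !mink_scale_l, mink_sym, !mink_scale_l, HV.
    assert (Hsq : - (s / (1 - c) * (s / (1 - c) * (-3 * ((1 - c) * (1 - c)))))
                  = Rsqr (sqrt 3 * s)).
    { unfold Rsqr; replace (sqrt 3 * s * (sqrt 3 * s)) with (sqrt 3 * sqrt 3 * (s * s)) by ring.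
      rewrite sqrt3_sqr; field; lra. }
    rewrite Hsq; apply sqrt_Rsqr; pose proof sqrt3_pos; nra. }
  unfold napR, centroid; cbv zeta. rewrite Hnorm, Hsum, vscale_vscale.
  f_equal. pose proof sqrt3_pos. field. lra.
Qed.

Lemma napR_inH eps A B : eps * eps = 1 -> inH A -> inH B -> inH (napR eps A B).
Proof.
  intros Heps HA HB.
  pose proof (inH_mink_le A B HA HB) as Hc.
  pose proof (mink_napV_unit eps A B Heps HA HB) as HV.
  rewrite (napR_closed_form eps A B Heps HA HB).
  set (c := mink A B) in *; set (V := napV (sqrt (1 - 2 * c)) eps A B) in *.
  assert (Hs : 0 < sqrt (1 - 2 * c)) by (apply sqrt_lt_R0; lra).
  pose proof sqrt3_pos; pose proof sqrt3_sqr.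
  destruct HA as [HAA HA1], HB as [HBB HB1].
  assert (HAB : mink (vadd A B) (vadd A B) = 2 * c - 2)
    by (rewrite !mink_add_l, !mink_add_r, (mink_sym B A); fold c; lra).
  (* V and A + B are timelike with negative pairing, hence equally time-oriented. *)
  assert (HV1 : 0 < Defs.c1 V * Defs.c1 (vadd A B)).
  { apply mink_timelike_neg_iff; [nra | lra |].
    unfold V; rewrite mink_napV_AB; fold c; nra. }
  apply inH_intro.
  - rewrite mink_scale_l, mink_sym, mink_scale_l, HV.
    replace (-3) with (- (sqrt 3 * sqrt 3)) by lra; field; lra.
  - rewrite c1_vscale, c1_vadd in *.
    apply Rmult_lt_0_compat; [apply Rinv_0_lt_compat; nra | nra].
Qed.

Definition gram (a0 a1 a2 : R) : R :=
  1 + 2 * a0 * a1 * a2 - a0 * a0 - a1 * a1 - a2 * a2.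

Definition sym3 (i j k : nat) (x y z : R) : R :=
  x ^ i * y ^ j * z ^ k + x ^ i * z ^ j * y ^ k + y ^ i * x ^ j * z ^ k
  + y ^ i * z ^ j * x ^ k + z ^ i * x ^ j * y ^ k + z ^ i * y ^ j * x ^ k.

Lemma sym3_nonneg i j k x y z : 0 <= x -> 0 <= y -> 0 <= z -> 0 <= sym3 i j k x y z.
Proof.
  intros Hx Hy Hz; unfold sym3.
  repeat apply Rplus_le_le_0_compat; repeat apply Rmult_le_pos; apply pow_le; assumption.
Qed.

Ltac nonneg_certificate :=
  repeat first [ apply Rle_0_sqr | apply sym3_nonneg
               | apply Rplus_le_le_0_compat | apply Rmult_le_pos ];
  try assumption; try lra.

(* With a_i = 1 + x_i, sigma = a0 + a1 + a2 and U = (1 + a0)(1 + a1)(1 + a2),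
   [slack x0 x1 x2] is 3 U (sigma - 2) times
     3 + 2 sigma - (sigma - 3)^2 / (20 (sigma - 2))
     - sum_i (2 + a_i)(2 + a_i + sigma) / (3 (1 + a_i)). *)
Definition slack (x0 x1 x2 : R) : R :=
  let u0 := 2 + x0 in let u1 := 2 + x1 in let u2 := 2 + x2 in
  let S := x0 + x1 + x2 in let sg := S + 3 in
  (3 + 2 * sg) * 3 * (u0 * u1 * u2) * (1 + S) - (3 / 20) * S * S * (u0 * u1 * u2)
  - (1 + S) * ((1 + u0) * (1 + u0 + sg) * (u1 * u2) + (1 + u1) * (1 + u1 + sg) * (u2 * u0)
               + (1 + u2) * (1 + u2 + sg) * (u0 * u1)).

Lemma slack_nonneg x0 x1 x2 : 0 <= x0 -> 0 <= x1 -> 0 <= x2 -> 0 <= slack x0 x1 x2.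
Proof.
  intros H0 H1 H2.
  replace (slack x0 x1 x2) with
    (6 * sym3 1 0 0 x0 x1 x2 + 94/5 * sym3 1 1 0 x0 x1 x2 + 37/5 * sym3 2 0 0 x0 x1 x2
     + 99/10 * sym3 1 1 1 x0 x1 x2 + 106/5 * sym3 2 1 0 x0 x1 x2 + 17/10 * sym3 3 0 0 x0 x1 x2
     + 43/4 * sym3 2 1 1 x0 x1 x2 + 27/10 * sym3 2 2 0 x0 x1 x2 + 27/10 * sym3 3 1 0 x0 x1 x2
     + 37/20 * sym3 2 2 1 x0 x1 x2 + 37/40 * sym3 3 1 1 x0 x1 x2)
    by (unfold slack, sym3; cbv zeta; field).
  nonneg_certificate.
Qed.

Lemma slack_sqr_ge x0 x1 x2 : 0 <= x0 -> 0 <= x1 -> 0 <= x2 ->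
  let e2 := (2 + x1) * (2 + x2) + (2 + x2) * (2 + x0) + (2 + x0) * (2 + x1) in
  let S := x0 + x1 + x2 in
  3 * gram (1 + x0) (1 + x1) (1 + x2) * (e2 * e2) * ((1 + S) * (1 + S))
  <= slack x0 x1 x2 * slack x0 x1 x2.
Proof.
  intros H0 H1 H2 e2 S.
  enough (0 <= slack x0 x1 x2 * slack x0 x1 x2
               - 3 * gram (1 + x0) (1 + x1) (1 + x2) * (e2 * e2) * ((1 + S) * (1 + S))) by lra.
  replace (slack x0 x1 x2 * slack x0 x1 x2
           - 3 * gram (1 + x0) (1 + x1) (1 + x2) * (e2 * e2) * ((1 + S) * (1 + S))) with
    (288 * (Rsqr (x0 - x1) + Rsqr (x1 - x2) + Rsqr (x2 - x0))
     + 3768/5 * (x0 + x1 + x2) * (Rsqr (x0 - x1) + Rsqr (x1 - x2) + Rsqr (x2 - x0))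
     + 100 * (x0 * Rsqr (x1 - x2) + x1 * Rsqr (x2 - x0) + x2 * Rsqr (x0 - x1))
     + 16958/25 * (Rsqr (x0 * x0 - x1 * x1) + Rsqr (x1 * x1 - x2 * x2) + Rsqr (x2 * x2 - x0 * x0))
     + 44384/25 * (x0 * x1 * Rsqr (x0 - x1) + x1 * x2 * Rsqr (x1 - x2) + x2 * x0 * Rsqr (x2 - x0))
     + 57304/25 * (Rsqr (x0 * x1 - x1 * x2) + Rsqr (x1 * x2 - x2 * x0) + Rsqr (x2 * x0 - x0 * x1))
     + 3952/5 * (x0 + x1 + x2)
       * (Rsqr (x0 * x1 - x1 * x2) + Rsqr (x1 * x2 - x2 * x0) + Rsqr (x2 * x0 - x0 * x1))
     + 600 * (x0 * x1 * x2) * (Rsqr (x0 - x1) + Rsqr (x1 - x2) + Rsqr (x2 - x0))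
     + 44/5 * sym3 1 1 1 x0 x1 x2 + 28/5 * sym3 2 1 0 x0 x1 x2 + 11706/25 * sym3 2 2 0 x0 x1 x2
     + 572/5 * sym3 2 2 1 x0 x1 x2 + 2192/5 * sym3 3 1 1 x0 x1 x2 + 1500 * sym3 4 1 0 x0 x1 x2
     + 6058/25 * sym3 5 0 0 x0 x1 x2 + 2943/25 * sym3 2 2 2 x0 x1 x2
     + 36026/25 * sym3 3 2 1 x0 x1 x2 + 13124/25 * sym3 3 3 0 x0 x1 x2
     + 18246/25 * sym3 4 1 1 x0 x1 x2 + 22787/25 * sym3 4 2 0 x0 x1 x2
     + 11002/25 * sym3 5 1 0 x0 x1 x2 + 1489/50 * sym3 6 0 0 x0 x1 x2
     + 59603/50 * sym3 3 2 2 x0 x1 x2 + 18352/25 * sym3 3 3 1 x0 x1 x2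
     + 28116/25 * sym3 4 2 1 x0 x1 x2 + 1539/5 * sym3 4 3 0 x0 x1 x2
     + 5224/25 * sym3 5 1 1 x0 x1 x2 + 906/5 * sym3 5 2 0 x0 x1 x2
     + 1059/25 * sym3 6 1 0 x0 x1 x2 + 6859/10 * sym3 3 3 2 x0 x1 x2
     + 89447/200 * sym3 4 2 2 x0 x1 x2 + 20939/50 * sym3 4 3 1 x0 x1 x2
     + 1887/100 * sym3 4 4 0 x0 x1 x2 + 10343/50 * sym3 5 2 1 x0 x1 x2
     + 729/25 * sym3 5 3 0 x0 x1 x2 + 829/50 * sym3 6 1 1 x0 x1 x2
     + 1029/100 * sym3 6 2 0 x0 x1 x2 + 3727/50 * sym3 3 3 3 x0 x1 x2
     + 13029/50 * sym3 4 3 2 x0 x1 x2 + 2397/100 * sym3 4 4 1 x0 x1 x2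
     + 10751/200 * sym3 5 2 2 x0 x1 x2 + 849/25 * sym3 5 3 1 x0 x1 x2
     + 999/100 * sym3 6 2 1 x0 x1 x2 + 4107/200 * sym3 4 3 3 x0 x1 x2
     + 4107/400 * sym3 4 4 2 x0 x1 x2 + 1369/100 * sym3 5 3 2 x0 x1 x2
     + 1369/800 * sym3 6 2 2 x0 x1 x2)
    by (unfold slack, gram, sym3, e2, S, Rsqr; cbv zeta; field).
  nonneg_certificate.
Qed.

Lemma slack_ge x0 x1 x2 d : 0 <= x0 -> 0 <= x1 -> 0 <= x2 -> 0 <= d ->
  3 * (d * d) = gram (1 + x0) (1 + x1) (1 + x2) ->
  3 * d * ((2 + x1) * (2 + x2) + (2 + x2) * (2 + x0) + (2 + x0) * (2 + x1)) * (1 + (x0 + x1 + x2))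
  <= slack x0 x1 x2.
Proof.
  intros X0 X1 X2 Hd Hd2.
  pose proof (slack_sqr_ge x0 x1 x2 X0 X1 X2) as Hsq; cbv zeta in Hsq.
  pose proof (slack_nonneg x0 x1 x2 X0 X1 X2).
  rewrite <- Hd2 in Hsq; nra.
Qed.

Definition pairing_majorant (D sg a : R) : R :=
  D / (sqrt 3 * (1 + a)) + (2 + a) * (2 + a + sg) / (3 * (1 + a)).

Lemma pairing_majorant_sum_le a0 a1 a2 D sg :
  1 <= a0 -> 1 <= a1 -> 1 <= a2 -> 0 <= D -> D * D = gram a0 a1 a2 -> sg = a0 + a1 + a2 ->
  pairing_majorant D sg a0 + pairing_majorant D sg a1 + pairing_majorant D sg a2
  <= 3 + 2 * sg - (sg - 3) * (sg - 3) / (20 * (sg - 2)).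
Proof.
  intros H0 H1 H2 HD HD2 ->.
  set (d := D / sqrt 3).
  assert (Hd : 0 <= d) by (unfold d, Rdiv; pose proof sqrt3_pos; apply Rmult_le_pos;
                           [lra | apply Rlt_le, Rinv_0_lt_compat; lra]).
  assert (Hd2 : 3 * (d * d) = gram a0 a1 a2).
  { rewrite <- HD2; unfold d; pose proof sqrt3_pos.
    replace (3 * (D / sqrt 3 * (D / sqrt 3))) with (D * D * (3 / (sqrt 3 * sqrt 3)))
      by (field; lra).
    rewrite sqrt3_sqr; field. }
  assert (Hmaj : forall a, 1 <= a ->
            pairing_majorant D (a0 + a1 + a2) a
            = d / (1 + a) + (2 + a) * (2 + a + (a0 + a1 + a2)) / (3 * (1 + a))).
  { intros a Ha; unfold pairing_majorant, d; pose proof sqrt3_pos; field; lra. }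
  rewrite !Hmaj by assumption; clearbody d; clear Hmaj HD2 HD D.
  replace a0 with (1 + (a0 - 1)) in * by ring.
  replace a1 with (1 + (a1 - 1)) in * by ring.
  replace a2 with (1 + (a2 - 1)) in * by ring.
  set (x0 := a0 - 1) in *; set (x1 := a1 - 1) in *; set (x2 := a2 - 1) in *.
  assert (X0 : 0 <= x0) by lra; assert (X1 : 0 <= x1) by lra; assert (X2 : 0 <= x2) by lra.
  clearbody x0 x1 x2; clear H0 H1 H2.
  set (e2 := (2 + x1) * (2 + x2) + (2 + x2) * (2 + x0) + (2 + x0) * (2 + x1)).
  set (S := x0 + x1 + x2).
  set (U := (2 + x0) * (2 + x1) * (2 + x2)).
  pose proof (slack_ge x0 x1 x2 d X0 X1 X2 Hd Hd2) as Hkey; fold e2 S in Hkey.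
  assert (HU : 0 < U) by (unfold U; repeat apply Rmult_lt_0_compat; lra).
  assert (HS : 0 <= S) by (unfold S; lra).
  match goal with |- ?L <= ?R =>
    assert (Hgap : R - L = (slack x0 x1 x2 - 3 * d * e2 * (1 + S)) / (3 * U * (1 + S)))
      by (unfold slack, e2, S, U; cbv zeta; field; lra) end.
  enough (0 <= (slack x0 x1 x2 - 3 * d * e2 * (1 + S)) / (3 * U * (1 + S))) by lra.
  apply Rmult_le_pos; [lra | apply Rlt_le, Rinv_0_lt_compat; nra].
Qed.

Lemma sqrt3_mul_sqrt_le a : - (1 / 2) <= a -> sqrt 3 * sqrt (1 + 2 * a) <= 2 + a.
Proof.
  intro Ha.
  rewrite <- sqrt_mult, <- (sqrt_square (2 + a)) by lra.
  apply sqrt_le_1_alt; pose proof (Rle_0_sqr (a - 1)); unfold Rsqr in *; nra.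
Qed.

Definition pairing_term (eps D sg a : R) : R :=
  (eps * D - sqrt (1 + 2 * a) * (2 + a + sg)) / (sqrt 3 * (1 + a)).

Lemma pairing_term_abs_le eps D sg a : eps * eps = 1 -> 1 <= a -> 0 <= D -> 0 <= sg ->
  Rabs (pairing_term eps D sg a) <= pairing_majorant D sg a.
Proof.
  intros Heps Ha HD Hsg.
  pose proof sqrt3_pos; pose proof sqrt3_sqr.
  pose proof (sqrt_pos (1 + 2 * a)) as Hs.
  pose proof (sqrt3_mul_sqrt_le a ltac:(lra)) as Hs3.
  set (s := sqrt (1 + 2 * a)) in *; set (k := 2 + a + sg).
  assert (HQ : 0 < sqrt 3 * (1 + a)) by nra.
  assert (Hnum : Rabs (eps * D - s * k) <= D + s * k).
  { assert (Habs : Rabs eps = 1).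
    { assert (Rabs eps * Rabs eps = 1) by (rewrite <- Rabs_mult, Heps; apply Rabs_R1).
      pose proof (Rabs_pos eps); nra. }
    eapply Rle_trans; [apply Rabs_triang |].
    rewrite Rabs_mult, Habs, Rabs_Ropp, !Rabs_pos_eq by (unfold k; nra); lra. }
  unfold pairing_term, pairing_majorant; fold s k.
  unfold Rdiv; rewrite Rabs_mult, (Rabs_pos_eq (/ _)) by (apply Rlt_le, Rinv_0_lt_compat; lra).
  assert (Hsk : s * k * / (sqrt 3 * (1 + a)) <= (2 + a) * k * / (3 * (1 + a))).
  { replace (s * k * / (sqrt 3 * (1 + a)))
      with (sqrt 3 * s * k * / (sqrt 3 * sqrt 3 * (1 + a))) by (field; lra).
    rewrite H0.
    apply Rmult_le_compat_r; [apply Rlt_le, Rinv_0_lt_compat; lra |].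
    apply Rmult_le_compat_r; unfold k; lra. }
  apply Rle_trans with ((D + s * k) * / (sqrt 3 * (1 + a))).
  - apply Rmult_le_compat_r; [apply Rlt_le, Rinv_0_lt_compat |]; lra.
  - rewrite Rmult_plus_distr_r; lra.
Qed.

Lemma pairing_sum_abs_le eps a0 a1 a2 D sg : eps * eps = 1 ->
  1 <= a0 -> 1 <= a1 -> 1 <= a2 -> 0 <= D -> D * D = gram a0 a1 a2 -> sg = a0 + a1 + a2 ->
  Rabs (pairing_term eps D sg a0 + pairing_term eps D sg a1 + pairing_term eps D sg a2)
  <= 3 + 2 * sg - (sg - 3) * (sg - 3) / (20 * (sg - 2)).
Proof.
  intros Heps H0 H1 H2 HD HD2 Hsg_def.
  pose proof (pairing_majorant_sum_le a0 a1 a2 D sg H0 H1 H2 HD HD2 Hsg_def) as Hmaj.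
  assert (Hsg : 0 <= sg) by lra.
  pose proof (pairing_term_abs_le eps D sg a0 Heps H0 HD Hsg).
  pose proof (pairing_term_abs_le eps D sg a1 Heps H1 HD Hsg).
  pose proof (pairing_term_abs_le eps D sg a2 Heps H2 HD Hsg).
  pose proof (Rabs_triang (pairing_term eps D sg a0 + pairing_term eps D sg a1)
                          (pairing_term eps D sg a2)).
  pose proof (Rabs_triang (pairing_term eps D sg a0) (pairing_term eps D sg a1)).
  lra.
Qed.

Lemma decrement_of_pairing_bound sg sg' q : 3 <= sg ->
  (3 + 2 * sg') * (3 + 2 * sg) <= q * q ->
  Rabs q <= 3 + 2 * sg - (sg - 3) * (sg - 3) / (20 * (sg - 2)) ->
  sg' <= sg - (sg - 3) * (sg - 3) / (40 * (sg - 2)).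
Proof.
  intros Hsg Hq Habs.
  replace ((sg - 3) * (sg - 3) / (40 * (sg - 2)))
    with ((sg - 3) * (sg - 3) / (20 * (sg - 2)) / 2) by (field; lra).
  set (r := (sg - 3) * (sg - 3) / (20 * (sg - 2))) in *.
  set (M := 3 + 2 * sg) in *.
  assert (Hr0 : 0 <= r)
    by (unfold r; apply Rmult_le_pos; [nra | apply Rlt_le, Rinv_0_lt_compat; lra]).
  assert (HrM : r <= M).
  { assert (r * (20 * (sg - 2)) = (sg - 3) * (sg - 3)) by (unfold r; field; lra).
    unfold M; nra. }
  assert (Hqq : q * q = Rabs q * Rabs q)
    by (rewrite <- Rabs_mult; symmetry; apply Rabs_pos_eq; nra).
  pose proof (Rabs_pos q).
  assert (Hle : (3 + 2 * sg') * M <= (M - r) * M) by (unfold M in *; nra).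
  assert (3 + 2 * sg' <= M - r) by (apply (Rmult_le_reg_r M); unfold M in *; lra).
  unfold M in *; lra.
Qed.

Lemma mink_napR_sum3 eps A B C D sg : eps * eps = 1 -> inH A -> inH B -> inH C ->
  D = mink (hcross A B) C -> sg = - mink A B - mink B C - mink C A ->
  mink (napR eps A B) (vadd (vadd A B) C) = pairing_term eps D sg (- mink A B).
Proof.
  intros Heps HA HB HC -> ->.
  pose proof (inH_mink_le A B HA HB).
  rewrite (napR_closed_form eps A B Heps HA HB), mink_scale_l, mink_napV_sum3.
  rewrite (proj1 HA), (proj1 HB), (mink_sym A C).
  unfold pairing_term; replace (1 + 2 * - mink A B) with (1 - 2 * mink A B) by ring.
  pose proof sqrt3_pos. field. lra.
Qed.

Definition htri_inH (T : htri) : Prop := inH (vtx T 0) /\ inH (vtx T 1) /\ inH (vtx T 2).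

Definition cosh_sum (T : htri) : R :=
  - mink (vtx T 1) (vtx T 2) - mink (vtx T 2) (vtx T 0) - mink (vtx T 0) (vtx T 1).

Lemma napoleonize_inH eps T : eps * eps = 1 -> htri_inH T -> htri_inH (napoleonize eps T).
Proof.
  intros Heps [H0 [H1 H2]].
  unfold htri_inH, napoleonize; simpl.
  repeat split; apply napR_inH; assumption.
Qed.

Lemma mink_napoleon_centroid eps P0 P1 P2 : eps * eps = 1 -> inH P0 -> inH P1 -> inH P2 ->
  let D := mink (hcross P0 P1) P2 in
  let sg := - mink P1 P2 - mink P2 P0 - mink P0 P1 in
  mink (vadd (vadd (napR eps P1 P2) (napR eps P2 P0)) (napR eps P0 P1)) (vadd (vadd P0 P1) P2)
  = pairing_term eps D sg (- mink P1 P2) + pairing_term eps D sg (- mink P2 P0)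
    + pairing_term eps D sg (- mink P0 P1).
Proof.
  intros Heps H0 H1 H2 D sg.
  rewrite !mink_add_l.
  rewrite (mink_napR_sum3 eps P0 P1 P2 D sg) by (auto; unfold sg; ring).
  rewrite (vadd3_cycle P0 P1 P2), (mink_napR_sum3 eps P1 P2 P0 D sg)
    by (auto; unfold D, sg; try rewrite mink_hcross_cycle; ring).
  rewrite (vadd3_cycle P1 P2 P0), (mink_napR_sum3 eps P2 P0 P1 D sg)
    by (auto; unfold D, sg; try rewrite <- mink_hcross_cycle; ring).
  ring.
Qed.

Lemma cosh_sum_napoleonize_le eps T : eps * eps = 1 -> htri_inH T -> 0 <= orient T ->
  cosh_sum (napoleonize eps T)
  <= cosh_sum T - (cosh_sum T - 3) * (cosh_sum T - 3) / (40 * (cosh_sum T - 2)).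
Proof.
  intros Heps HT Hor.
  pose proof (napoleonize_inH eps T Heps HT) as [HR0 [HR1 HR2]].
  destruct T as [[P0 P1] P2]; destruct HT as [H0 [H1 H2]].
  pose proof (mink_napoleon_centroid eps P0 P1 P2 Heps H0 H1 H2) as HYZ.
  unfold napoleonize, orient, cosh_sum in *; simpl in *; cbv zeta in HYZ.
  set (R0 := napR eps P1 P2) in *; set (R1 := napR eps P2 P0) in *; set (R2 := napR eps P0 P1) in *.
  set (sg := - mink P1 P2 - mink P2 P0 - mink P0 P1) in *.
  set (D := mink (hcross P0 P1) P2) in *.
  pose proof (inH_mink_le _ _ H1 H2); pose proof (inH_mink_le _ _ H2 H0);
    pose proof (inH_mink_le _ _ H0 H1).
  assert (HZ : mink (vadd (vadd P0 P1) P2) (vadd (vadd P0 P1) P2) = -3 - 2 * sg).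
  { rewrite mink_sum3_unit by (apply H0 || apply H1 || apply H2).
    unfold sg; rewrite (mink_sym P2 P0); ring. }
  assert (HY : mink (vadd (vadd R0 R1) R2) (vadd (vadd R0 R1) R2)
               = -3 - 2 * (- mink R1 R2 - mink R2 R0 - mink R0 R1)).
  { rewrite mink_sum3_unit by (apply HR0 || apply HR1 || apply HR2).
    rewrite (mink_sym R2 R0); ring. }
  assert (HD2 : D * D = gram (- mink P1 P2) (- mink P2 P0) (- mink P0 P1)).
  { unfold D, gram; rewrite mink_hcross_sqr, (proj1 H0), (proj1 H1), (proj1 H2).
    rewrite (mink_sym P2 P0); ring. }
  apply (decrement_of_pairing_bound sg _ (mink (vadd (vadd R0 R1) R2) (vadd (vadd P0 P1) P2))).
  - unfold sg; lra.
  - eapply Rle_trans; [| apply reverse_cauchy_schwarz; unfold sg in HZ; lra].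
    rewrite HY, HZ; lra.
  - rewrite HYZ; apply (pairing_sum_abs_le eps _ _ _ D sg Heps); try lra.
    unfold sg; ring.
Qed.

Lemma relabel_inH T L : relabel T L -> htri_inH T -> htri_inH L /\ cosh_sum L = cosh_sum T.
Proof.
  destruct T as [[a b] c]; unfold relabel, htri_inH, cosh_sum; simpl.
  intros HL [Ha [Hb Hc]].
  destruct HL as [-> | [-> | [-> | [-> | [-> | ->]]]]]; simpl; (split; [tauto |]);
    rewrite ?(mink_sym b a), ?(mink_sym c b), ?(mink_sym a c); ring.
Qed.

Lemma side_cosh_bounds T i j : htri_inH T -> (i < 3)%nat -> (j < 3)%nat -> i <> j ->
  1 <= - mink (vtx T i) (vtx T j) <= cosh_sum T - 2.
Proof.
  intros [H0 [H1 H2]] Hi Hj Hij; unfold cosh_sum.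
  pose proof (inH_mink_le _ _ H1 H2); pose proof (inH_mink_le _ _ H2 H0);
    pose proof (inH_mink_le _ _ H0 H1).
  destruct i as [| [| [| i]]]; try lia; destruct j as [| [| [| j]]]; try lia;
    rewrite ?(mink_sym (vtx T 1) (vtx T 0)), ?(mink_sym (vtx T 2) (vtx T 1)),
      ?(mink_sym (vtx T 0) (vtx T 2)); lra.
Qed.

Lemma Un_cv_const c : Un_cv (fun _ => c) c.
Proof. intros e He; exists O; intros n _; unfold R_dist; rewrite Rminus_diag, Rabs_R0; lra. Qed.

Lemma Un_cv_0_of_quadratic_decrease (t : nat -> R) (c : R) : 0 < c ->
  (forall k, 0 <= t k) ->
  (forall k, t (S k) <= t k - t k * t k / (c * (1 + t k))) ->
  Un_cv t 0.
Proof.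
  intros Hc Hpos Hrec.
  assert (Hdec : Un_decreasing t).
  { intro k; specialize (Hrec k); specialize (Hpos k).
    enough (0 <= t k * t k / (c * (1 + t k))) by lra.
    apply Rmult_le_pos; [nra | apply Rlt_le, Rinv_0_lt_compat; nra]. }
  destruct (decreasing_cv t Hdec) as [l Hl].
  { exists 0; intros x [n ->]; unfold opp_seq; specialize (Hpos n); lra. }
  assert (Hl0 : 0 <= l) by exact (Rle_cv_lim Hpos (Un_cv_const 0) Hl).
  set (delta := l * l / (c * (1 + t O))).
  assert (Hgap : forall n, delta <= t n - t (n + 1)%nat).
  { intro n; rewrite Nat.add_1_r.
    pose proof (decreasing_ineq t l Hdec Hl n).
    pose proof (decreasing_prop t O n Hdec (Nat.le_0_l n)).
    specialize (Hrec n).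
    enough (delta <= t n * t n / (c * (1 + t n))) by lra.
    unfold delta, Rdiv.
    apply Rle_trans with (t n * t n * / (c * (1 + t O))).
    - apply Rmult_le_compat_r; [apply Rlt_le, Rinv_0_lt_compat; nra | nra].
    - apply Rmult_le_compat_l; [nra |].
      apply Rinv_le_contravar; nra. }
  assert (Hgap_cv : Un_cv (fun n => t n - t (n + 1)%nat) 0).
  { replace 0 with (l - l) by ring. exact (CV_minus _ _ _ _ Hl (CV_shift' t 1 l Hl)). }
  pose proof (Rle_cv_lim Hgap (Un_cv_const delta) Hgap_cv) as Hdelta.
  assert (Hll : l * l <= 0).
  { unfold delta, Rdiv in Hdelta.
    assert (0 < / (c * (1 + t O))) by (apply Rinv_0_lt_compat; specialize (Hpos O); nra).
    nra. }
  replace l with 0 in Hl by nra; exact Hl.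
Qed.

Lemma Un_cv_of_dist_le (u t : nat -> R) (l : R) :
  (forall k, Rabs (u k - l) <= t k) -> Un_cv t 0 -> Un_cv u l.
Proof.
  intros Hle Ht e He.
  destruct (Ht e He) as [N HN]; exists N; intros n Hn.
  specialize (HN n Hn); unfold R_dist in *; rewrite Rminus_0_r in HN.
  pose proof (Hle n); pose proof (Rle_abs (t n)); lra.
Qed.

Theorem theorem1p2 (eps : R) (Heps : eps = 1 \/ eps = -1)
  (T : nat -> htri)
  (H0 : forall i : nat, (i < 3)%nat -> inH (vtx (T O) i))
  (Hnondeg : orient (T O) <> 0)
  (Hstep : forall k : nat, exists L : htri,
      relabel (T k) L /\ 0 <= orient L /\ T (S k) = napoleonize eps L) :
  forall i j : nat, (i < 3)%nat -> (j < 3)%nat -> i <> j ->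
    Un_cv (fun k => - mink (vtx (T k) i) (vtx (T k) j)) 1.
Proof.
  assert (Heps2 : eps * eps = 1) by (destruct Heps; subst; ring).
  assert (HT : forall k, htri_inH (T k)).
  { induction k as [| k IH].
    - repeat split; apply H0; lia.
    - destruct (Hstep k) as [L [HL [_ ->]]].
      apply napoleonize_inH; [exact Heps2 | exact (proj1 (relabel_inH _ _ HL IH))]. }
  assert (Hdecr : forall k, cosh_sum (T (S k)) - 3 <= (cosh_sum (T k) - 3)
            - (cosh_sum (T k) - 3) * (cosh_sum (T k) - 3) / (40 * (1 + (cosh_sum (T k) - 3)))).
  { intro k; destruct (Hstep k) as [L [HL [Hor ->]]].
    destruct (relabel_inH _ _ HL (HT k)) as [HLin <-].
    replace (1 + (cosh_sum L - 3)) with (cosh_sum L - 2) by ring.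
    pose proof (cosh_sum_napoleonize_le eps L Heps2 HLin Hor); lra. }
  assert (Hcv : Un_cv (fun k => cosh_sum (T k) - 3) 0).
  { apply (Un_cv_0_of_quadratic_decrease _ 40); [lra | | exact Hdecr].
    intro k.
    pose proof (side_cosh_bounds (T k) 0 1 (HT k) ltac:(lia) ltac:(lia) ltac:(lia)); lra. }
  intros i j Hi Hj Hij.
  apply (Un_cv_of_dist_le _ (fun k => cosh_sum (T k) - 3)); [| exact Hcv].
  intro k; pose proof (side_cosh_bounds (T k) i j (HT k) Hi Hj Hij).
  rewrite Rabs_pos_eq; lra.
Qed.
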